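(* Let $G$ be a $K_3$-free graph and let $P=X_PY_P$ and $Q=X_QY_Q$ be two bicliques of $G$ that are not mutually included and satisfy $X_P\cap X_Q\neq\emptyset$. Then there is a biclique $R=X_RY_R$ of $G$ with $X_R=X_P\cap X_Q$ and $Y_R\supseteq Y_P\cup Y_Q$.
   Context: All graphs are finite and simple. A biclique of a graph $G$ is a set $P\subseteq V(G)$ such that the induced subgraph $G[P]$ is a complete bipartite graph with both parts nonempty, and $P$ is inclusion-maximal with this property. Since $G[P]$ is connected, its bipartition into two nonempty independent sets $X,Y$ (every vertex of $X$ adjacent to every vertex of $Y$) is unique; we write $P=XY$ to mean $P=X\cup Y$ with $X,Y$ these two parts, called the sides of $P$. Two bicliques $P,Q$ of $G$ are mutually included if their sides can be named $P=X_PY_P$, $Q=X_QY_Q$ so that $X_Q\subsetneq X_P$ and $Y_P\subsetneq Y_Q$. *)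

From mathcomp Require Import all_boot.
Set Implicit Arguments. Unset Strict Implicit. Unset Printing Implicit Defensive.

Section Graphs.
Variables (T : finType) (e : rel T).

Definition simple_graph : Prop := symmetric e /\ irreflexive e.

Definition K3_free : Prop :=
  forall x y z : T, ~ [&& e x y, e y z & e x z].

Definition independent (A : {set T}) : Prop :=
  forall x y, x \in A -> y \in A -> ~~ e x y.

Definition complete_bip (X Y : {set T}) : Prop :=
  [/\ X != set0, Y != set0, independent X, independent Y &
      forall x y, x \in X -> y \in Y -> e x y].

Definition cbip_set (P : {set T}) : Prop :=
  exists X Y : {set T}, P = X :|: Y /\ complete_bip X Y.

Definition biclique (P : {set T}) : Prop :=
  cbip_set P /\ forall P' : {set T}, P \subset P' -> cbip_set P' -> P' = P.

(* P = XY : X, Y are the two sides of P *)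
Definition sides (P X Y : {set T}) : Prop :=
  P = X :|: Y /\ complete_bip X Y.

Definition mutually_included (P Q : {set T}) : Prop :=
  exists XP YP XQ YQ : {set T},
    [/\ sides P XP YP, sides Q XQ YQ, XQ \proper XP & YP \proper YQ].

End Graphs.

From mathcomp Require Import all_boot.
Set Implicit Arguments. Unset Strict Implicit. Unset Printing Implicit Defensive.

(* Write N(A) for the common neighbourhood of a vertex set A, the vertices
   adjacent to every vertex of A.  The proof is a closure argument for N.
   - In a triangle-free graph N(A) is independent as soon as A is nonempty,
     and N is inclusion-reversing.
   - The sides of a biclique P = XY satisfy X = N(Y): completeness gives
     X ⊆ N(Y), and maximality of P gives N(Y) ⊆ X.
   - If X is nonempty, N(X) is nonempty and N(N(X)) ⊆ X, then X ∪ N(X) is a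
     biclique with sides X and N(X): a complete bipartite superset X'Y' must
     put X on one side, hence N(X) on the other, and then antitonicity of N
     squeezes X' into N(N(X)) ⊆ X and Y' into N(X).
   For the theorem take X = X_P ∩ X_Q and Y_R = N(X): Y_P ∪ Y_Q ⊆ N(X) by
   antitonicity, and N(N(X)) ⊆ N(Y_P) ∩ N(Y_Q) = X_P ∩ X_Q. *)

Section CommonNeighbourhood.
Variables (T : finType) (e : rel T).
Hypothesis e_sym : symmetric e.

Definition common_nbhd (A : {set T}) : {set T} := [set v | [forall a in A, e v a]].

Lemma common_nbhdP (A : {set T}) v :
  reflect (forall a, a \in A -> e v a) (v \in common_nbhd A).
Proof.
rewrite inE; apply: (iffP forallP) => [H a aA | H a].
  by have := H a; rewrite aA.
by apply/implyP; apply: H.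
Qed.

Lemma common_nbhdS (A B : {set T}) :
  A \subset B -> common_nbhd B \subset common_nbhd A.
Proof.
move=> /subsetP AB; apply/subsetP=> v /common_nbhdP vB.
by apply/common_nbhdP=> a /AB; apply: vB.
Qed.

Lemma sub_common_nbhd2 (A : {set T}) : A \subset common_nbhd (common_nbhd A).
Proof.
by apply/subsetP=> a aA; apply/common_nbhdP=> v /common_nbhdP /(_ a aA); rewrite e_sym.
Qed.

Lemma common_nbhd_indep (A : {set T}) :
  K3_free e -> A != set0 -> independent e (common_nbhd A).
Proof.
move=> k3 /set0Pn[a aA] u v /common_nbhdP /(_ a aA) eua /common_nbhdP /(_ a aA) eva.
apply/negP=> euv; apply: (k3 a u v).
by rewrite (e_sym a u) (e_sym a v) eua eva euv.
Qed.

Lemma complete_bip_sym (X Y : {set T}) : complete_bip e X Y -> complete_bip e Y X.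
Proof. by case=> X0 Y0 iX iY eXY; split=> // y x yY xX; rewrite e_sym; apply: eXY. Qed.

Lemma complete_bip_sub_nbhd (X Y : {set T}) :
  complete_bip e X Y -> X \subset common_nbhd Y.
Proof. by case=> _ _ _ _ eXY; apply/subsetP=> x xX; apply/common_nbhdP=> y; apply: eXY. Qed.

Lemma complete_bip_nbhd (X : {set T}) :
  K3_free e -> X != set0 -> independent e X -> common_nbhd X != set0 ->
  complete_bip e X (common_nbhd X).
Proof.
move=> k3 X0 iX N0; split=> //; first exact: common_nbhd_indep.
by move=> x v xX /common_nbhdP /(_ x xX); rewrite e_sym.
Qed.

Lemma complete_bip_neighbour (X' Y' : {set T}) u v :
  complete_bip e X' Y' -> u \in X' -> v \in X' :|: Y' -> e u v -> v \in Y'.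
Proof.
case=> _ _ iX' _ _ uX' /setUP[vX'|//] euv.
by have := iX' u v uX' vX'; rewrite euv.
Qed.

Hypothesis e_irr : irreflexive e.
Hypothesis k3 : K3_free e.

Lemma biclique_side_nbhd (P X Y : {set T}) :
  biclique e P -> sides e P X Y -> X = common_nbhd Y.
Proof.
move=> [_ Pmax] [PE cbXY]; have XN := complete_bip_sub_nbhd cbXY.
have [X0 Y0 _ iY _] := cbXY.
have N0 : common_nbhd Y != set0.
  by case/set0Pn: X0 => x xX; apply/set0Pn; exists x; apply: (subsetP XN).
have cbN : complete_bip e (common_nbhd Y) Y.
  by apply/complete_bip_sym/complete_bip_nbhd.
have PN : P \subset common_nbhd Y :|: Y by rewrite PE setSU.
have NP : common_nbhd Y :|: Y = P by apply: Pmax PN _; exists (common_nbhd Y), Y.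
apply/eqP; rewrite eqEsubset XN; apply/subsetP=> v vN.
have : v \in P by rewrite -NP inE vN.
rewrite PE => /setUP[// | vY].
by move/common_nbhdP: vN => /(_ v vY); rewrite e_irr.
Qed.

Lemma closed_biclique (X : {set T}) :
  X != set0 -> common_nbhd X != set0 -> common_nbhd (common_nbhd X) \subset X ->
  biclique e (X :|: common_nbhd X).
Proof.
move=> X0 N0 closedX.
have iX : independent e X.
  move=> x y /(subsetP (sub_common_nbhd2 X)) xN /(subsetP (sub_common_nbhd2 X)) yN.
  exact: (common_nbhd_indep k3 N0).
have cbX := complete_bip_nbhd k3 X0 iX N0.
split; first by exists X, (common_nbhd X).
move=> P' sub [X1 [Y1 [P'E cb1]]]; case/set0Pn: (X0) => a aX.
have aP' : a \in X1 :|: Y1 by rewrite -P'E (subsetP sub) // inE aX.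
wlog aX' : X1 Y1 P'E cb1 aP' / a \in X1.
  move=> W; case/setUP: (aP') => [aX1|aY1]; first exact: (W X1 Y1).
  by apply: (W Y1 X1); rewrite 1?setUC //; apply: complete_bip_sym.
have sXN : X :|: common_nbhd X \subset X1 :|: Y1 by rewrite -P'E.
have NY : common_nbhd X \subset Y1.
  apply/subsetP=> v vN; apply: (complete_bip_neighbour cb1 aX').
    by rewrite (subsetP sXN) // inE vN orbT.
  by move/common_nbhdP: vN => /(_ a aX); rewrite e_sym.
have XX1 : X \subset X1.
  case/set0Pn: N0 => b bN; have bY : b \in Y1 := subsetP NY b bN.
  apply/subsetP=> x xX; apply: (complete_bip_neighbour (complete_bip_sym cb1) bY).
    by rewrite setUC (subsetP sXN) // inE xX.
  by move/common_nbhdP: bN; apply.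
have Y1N : Y1 \subset common_nbhd X.
  apply: subset_trans (common_nbhdS XX1).
  exact: complete_bip_sub_nbhd (complete_bip_sym cb1).
have X1X : X1 \subset X.
  apply: subset_trans closedX; apply: subset_trans (common_nbhdS NY).
  exact: complete_bip_sub_nbhd.
by apply/eqP; rewrite eqEsubset sub P'E setUSS.
Qed.

End CommonNeighbourhood.

Theorem lemma1 (T : finType) (e : rel T) :
  simple_graph e -> K3_free e ->
  forall P Q XP YP XQ YQ : {set T},
    biclique e P -> biclique e Q ->
    sides e P XP YP -> sides e Q XQ YQ ->
    ~ mutually_included e P Q ->
    XP :&: XQ != set0 ->
    exists YR : {set T},
      [/\ biclique e ((XP :&: XQ) :|: YR), sides e ((XP :&: XQ) :|: YR) (XP :&: XQ) YR
        & (YP :|: YQ) \subset YR].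
Proof.
move=> [e_sym e_irr] k3 P Q XP YP XQ YQ bP bQ sP sQ _ X0.
set X := XP :&: XQ.
have XPE := biclique_side_nbhd e_sym e_irr k3 bP sP.
have XQE := biclique_side_nbhd e_sym e_irr k3 bQ sQ.
have YPN : YP \subset common_nbhd e X.
  apply: subset_trans (common_nbhdS e (subsetIl XP XQ)).
  by case: sP => _ /(complete_bip_sym e_sym) /complete_bip_sub_nbhd.
have YQN : YQ \subset common_nbhd e X.
  apply: subset_trans (common_nbhdS e (subsetIr XP XQ)).
  by case: sQ => _ /(complete_bip_sym e_sym) /complete_bip_sub_nbhd.
have N0 : common_nbhd e X != set0.
  case: sP => _ [_ /set0Pn[y yYP] _ _ _].
  by apply/set0Pn; exists y; apply: (subsetP YPN).
have closedX : common_nbhd e (common_nbhd e X) \subset X.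
  by rewrite subsetI XPE XQE !common_nbhdS.
have iX : independent e X.
  by case: sP => _ [_ _ iXP _ _] x y /setIP[xP _] /setIP[yP _]; apply: iXP.
exists (common_nbhd e X); split.
- exact: closed_biclique.
- by split; last exact: complete_bip_nbhd.
- by rewrite subUset YPN YQN.
Qed.
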